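(* Let $\mathbb{X}=\mathbb{X}(p_1,p_2,p_3)$ be a weighted projective line with $\chi_{\mathbb{X}}<0$, and let $\mathcal{S}=\{\vec{x}\in\mathbb{L}\mid 0\leq\vec{x}\leq n\vec{\omega}+\vec{c}\text{ for all integers }n\geq 2\}$. If $a\vec{x}_i\in\mathcal{S}$ for some integer $a>0$ and some $1\leq i\leq 3$, then $(p_i-a+j)\vec{\omega}>0$ for every $1\leq j\leq a$.
   Context: $\mathbb{L}=\mathbb{L}(p_1,p_2,p_3)$ ($p_i\geq 2$) is the abelian group generated by $\vec{x}_1,\vec{x}_2,\vec{x}_3$ with $p_1\vec{x}_1=p_2\vec{x}_2=p_3\vec{x}_3=:\vec{c}$; $\vec{x}\geq\vec{y}$ means $\vec{x}-\vec{y}$ is a nonnegative integer combination of $\vec{x}_1,\vec{x}_2,\vec{x}_3$, and $\vec{x}>\vec{y}$ means $\vec{x}\geq\vec{y}$ and $\vec{x}\neq\vec{y}$. $\vec{\omega}=\vec{c}-\sum_i\vec{x}_i$ and $\chi_{\mathbb{X}}=2-\sum_{i=1}^3(1-1/p_i)$. *)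

From mathcomp Require Import all_boot all_order all_algebra.
Set Implicit Arguments. Unset Strict Implicit. Unset Printing Implicit Defensive.
Import Order.TTheory GRing.Theory Num.Theory.
Local Open Scope ring_scope.

(* The string group L(p_1,p_2,p_3) presented as Z^3 (coefficients of
   x_1,x_2,x_3, indexed by 'I_3) modulo the subgroup generated by
   p_1 e_1 - p_2 e_2 and p_2 e_2 - p_3 e_3.  An element of L is represented by
   any integer triple; [Leq p u v] is equality in L. *)
Definition Lvec := 'I_3 -> int.

Definition Leq (p : 'I_3 -> nat) (u v : Lvec) : Prop :=
  exists t : 'I_3 -> int,
    (forall i, u i - v i = t i * (p i)%:Z) /\ \sum_(i < 3) t i = 0.

Definition Lsub (u v : Lvec) : Lvec := fun i => u i - v i.
Definition Lzero : Lvec := fun _ => 0.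
Definition Lscale (k : int) (u : Lvec) : Lvec := fun i => k * u i.

Definition Lge (p : 'I_3 -> nat) (x y : Lvec) : Prop :=
  exists n : 'I_3 -> nat, Leq p (Lsub x y) (fun i => (n i)%:Z).

Definition Lgt (p : 'I_3 -> nat) (x y : Lvec) : Prop :=
  Lge p x y /\ ~ Leq p x y.

Definition Lx (i : 'I_3) : Lvec := fun j => if j == i then 1 else 0.
Definition Lc (p : 'I_3 -> nat) : Lvec := Lscale (p ord0)%:Z (Lx ord0).
(* omega = c - x_1 - x_2 - x_3 *)
Definition Lomega (p : 'I_3 -> nat) : Lvec := fun j => Lc p j - 1.

Definition Ladd (u v : Lvec) : Lvec := fun i => u i + v i.

Definition inS (p : 'I_3 -> nat) (x : Lvec) : Prop :=
  Lge p x Lzero /\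
  forall n : int, 2 <= n -> Lge p (Ladd (Lscale n (Lomega p)) (Lc p)) x.

Definition chiX (p : 'I_3 -> nat) : rat :=
  2 - \sum_(i < 3) (1 - ((p i)%:R)^-1).

(* Every element of L has a unique normal form sum_m l_m x_m + l c with
   0 <= l_m < p_m, and it is >= 0 iff l >= 0; for any integer representative
   (x_m) of it, l = sum_m floor(x_m / p_m).  Testing a x_i <= 2 w + c this way
   gives a <= p_i - 2.  For k = p_i - a + j the elements k w and
   k w + c - a x_i = k w + (p_i - a) x_i have the same coefficient l, so the
   hypothesis at n = k yields k w >= 0.  Finally k w <> 0 because the degree
   map L -> Q, x_m |-> 1 / p_m, is well defined and sends w to -chi > 0. *)

From mathcomp Require Import all_boot all_order all_algebra zify ring.
Set Implicit Arguments.
Unset Strict Implicit.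

Import Order.TTheory GRing.Theory Num.Theory.
Local Open Scope ring_scope.

Lemma divz_between (m d q : int) :
  0 < d -> q * d <= m < (q + 1) * d -> (m %/ d)%Z = q.
Proof.
move=> d_gt0 /andP[lo hi]; apply/eqP; rewrite eq_le.
by rewrite -ltzD1 ltz_divLR // hi lez_divRL.
Qed.

Section StringGroup.

Variable p : 'I_3 -> nat.
Hypothesis p_gt0 : forall m, (0 < p m)%N.

Let pz_gt0 m : 0 < (p m)%:Z. Proof. by rewrite ltz_nat. Qed.
Let pz_neq0 m : (p m)%:Z != 0. Proof. exact: lt0r_neq0. Qed.

Definition Lfloor (x : Lvec) : int := \sum_(m < 3) (x m %/ (p m)%:Z)%Z.

Lemma eq_Lfloor (x y : Lvec) : x =1 y -> Lfloor x = Lfloor y.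
Proof. by move=> xy; apply: eq_bigr => m _; rewrite xy. Qed.

Lemma Lfloor_addLx (b : int) i (x : Lvec) :
  Lfloor (fun m => x m + b * Lx i m)
  = Lfloor x + (((x i + b) %/ (p i)%:Z)%Z - (x i %/ (p i)%:Z)%Z).
Proof.
rewrite /Lfloor (bigD1 i) //= [in RHS](bigD1 i) //= /Lx eqxx mulr1.
rewrite (eq_bigr (fun m => (x m %/ (p m)%:Z)%Z)) => [|m /negbTE ->]; last first.
  by rewrite mulr0 addr0.
ring.
Qed.

Lemma LgeP (x y : Lvec) : Lge p x y <-> 0 <= Lfloor (Lsub x y).
Proof.
split=> [[n [t [ut sum_t]]] | floor_ge0].
  rewrite -sum_t; apply: ler_sum => m _.
  by rewrite lez_divRL ?ltz_nat //; have := ut m; rewrite /Lsub; lia.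
(* Take the floors, and take the whole c-coefficient off the first one. *)
pose t m := ((Lsub x y m) %/ (p m)%:Z)%Z - (m == ord0)%:R * Lfloor (Lsub x y).
have t_le m : t m * (p m)%:Z <= Lsub x y m.
  have := lez_floor (Lsub x y m) (pz_neq0 m).
  have Lp_ge0 : 0 <= Lfloor (Lsub x y) * (p m)%:Z by rewrite mulr_ge0.
  rewrite /t mulrBl -mulrA; case: (m == ord0); rewrite ?mul1r ?mul0r; lia.
exists (fun m => absz (Lsub x y m - t m * (p m)%:Z)%R), t; split.
  by move=> m; rewrite gez0_abs ?subr_ge0 //; ring.
rewrite sumrB -/(Lfloor _) (bigD1 ord0) //= big1 ?addr0 ?mul1r ?subrr // => m.
by move/negbTE ->; rewrite mul0r.
Qed.

Lemma Lfloor_scale_omega (n : int) :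
  Lfloor (Lsub (Lscale n (Lomega p)) Lzero)
  = n + \sum_(m < 3) ((- n) %/ (p m)%:Z)%Z.
Proof.
rewrite (@eq_Lfloor _ (fun m => - n + (n * (p ord0)%:Z) * Lx ord0 m)).
  by rewrite Lfloor_addLx [- n + _]addrC divzMDl // addrK addrC.
by move=> m; rewrite /Lsub /Lscale /Lomega /Lc /Lscale /Lzero; ring.
Qed.

Lemma Lfloor_omega_c_sub_Lx (n b : int) i :
  Lfloor (Lsub (Ladd (Lscale n (Lomega p)) (Lc p)) (Lscale b (Lx i)))
  = Lfloor (Lsub (Lscale n (Lomega p)) Lzero) + 1
    + (((- n - b) %/ (p i)%:Z)%Z - ((- n) %/ (p i)%:Z)%Z).
Proof.
rewrite (@eq_Lfloor _ (fun m =>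
  - n + - b * Lx i m + ((n + 1) * (p ord0)%:Z) * Lx ord0 m)); last first.
  by move=> m; rewrite /Lsub /Ladd /Lscale /Lomega /Lc /Lscale; ring.
rewrite Lfloor_addLx [_ + (n + 1) * _]addrC divzMDl // addrK.
rewrite Lfloor_addLx Lfloor_scale_omega.
ring.
Qed.

Lemma Lge_omega_c_LxP (k b : int) i :
  1 <= k <= (p i)%:Z -> (p i)%:Z < k + b <= 2 * (p i)%:Z ->
  Lge p (Ladd (Lscale k (Lomega p)) (Lc p)) (Lscale b (Lx i))
  <-> Lge p (Lscale k (Lomega p)) Lzero.
Proof.
move=> k_range kb_range; have := pz_gt0 i; rewrite !LgeP Lfloor_omega_c_sub_Lx.
rewrite (@divz_between (- k - b) _ (-2)) ?(@divz_between (- k) _ (-1)) => //.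
all: lia.
Qed.

Lemma Lge_2omega_c_Lx_le (b : int) i :
  (forall m, (2 <= p m)%N) ->
  Lge p (Ladd (Lscale 2 (Lomega p)) (Lc p)) (Lscale b (Lx i)) ->
  b + 2 <= (p i)%:Z.
Proof.
move=> p_ge2.
have div_m2 m : ((- 2) %/ (p m)%:Z)%Z = -1.
  by apply: divz_between => //; have := p_ge2 m; lia.
rewrite LgeP Lfloor_omega_c_sub_Lx Lfloor_scale_omega.
under eq_bigr do rewrite div_m2.
rewrite div_m2 sumr_const card_ord => floor_ge0.
have : -1 <= ((- 2 - b) %/ (p i)%:Z)%Z by lia.
by rewrite lez_divRL //; lia.
Qed.

Definition Ldeg (x : Lvec) : rat := \sum_(m < 3) (x m)%:~R / (p m)%:R.

Lemma Ldeg_Leq (u v : Lvec) : Leq p u v -> Ldeg u = Ldeg v.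
Proof.
move=> [t [uv sum_t]]; apply/eqP; rewrite -subr_eq0 /Ldeg -sumrB.
rewrite (eq_bigr (fun m => (t m)%:~R)) => [|m _].
  by rewrite -rmorph_sum sum_t.
rewrite -mulrBl -intrB uv intrM mulfK // pnatr_eq0 -lt0n //.
Qed.

Lemma Ldeg_scale (k : int) (x : Lvec) : Ldeg (Lscale k x) = k%:~R * Ldeg x.
Proof.
by rewrite /Ldeg mulr_sumr; apply: eq_bigr => m _; rewrite intrM mulrA.
Qed.

Lemma Ldeg_omega : Ldeg (Lomega p) = - chiX p.
Proof.
rewrite /Ldeg /chiX sumrB sumr_const card_ord.
under eq_bigr do rewrite /Lomega intrB mulrBl.
rewrite sumrB (bigD1 ord0) //= big1 => [|m /negbTE m_neq0]; last first.
  by rewrite /Lc /Lscale /Lx m_neq0 mulr0 mul0r.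
rewrite /Lc /Lscale /Lx eqxx mulr1 divff ?pnatr_eq0 -?lt0n // addr0.
under eq_bigr do rewrite div1r.
ring.
Qed.

Lemma Lscale_omega_neq0 (k : int) :
  chiX p < 0 -> 0 < k -> ~ Leq p (Lscale k (Lomega p)) Lzero.
Proof.
move=> chi_lt0 k_gt0 /Ldeg_Leq; rewrite Ldeg_scale Ldeg_omega.
rewrite /Ldeg big1 => [|m _]; last by rewrite mul0r.
by move/eqP; rewrite mulf_eq0 oppr_eq0 intr_eq0 (gt_eqF k_gt0) (lt_eqF chi_lt0).
Qed.

End StringGroup.

Theorem lemma5p2 (p : 'I_3 -> nat) (hp : forall i, (2 <= p i)%N)
  (hchi : chiX p < 0) (a : nat) (i : 'I_3) (ha : (0 < a)%N)
  (hS : inS p (Lscale a%:Z (Lx i))) :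
  forall j : nat, (1 <= j <= a)%N ->
    Lgt p (Lscale ((p i)%:Z - a%:Z + j%:Z) (Lomega p)) Lzero.
Proof.
move=> j /andP[j_ge1 j_le_a].
have p_gt0 m : (0 < p m)%N by apply: leq_trans (hp m).
have [_ below_omega_c] := hS.
have a_le := Lge_2omega_c_Lx_le p_gt0 hp (below_omega_c 2 (lexx _)).
set k := (p i)%:Z - a%:Z + j%:Z.
have k_range : 1 <= k <= (p i)%:Z by lia.
have ka_range : (p i)%:Z < k + a%:Z <= 2 * (p i)%:Z by lia.
split; last by apply: Lscale_omega_neq0 => //; lia.
by rewrite -(Lge_omega_c_LxP p_gt0 k_range ka_range); apply: below_omega_c; lia.
Qed.
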